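(* Let $X$ be a finite Abelian group containing no elements of order $2$, and let $\alpha$ be an automorphism of $X$. Set $K=\mathrm{Ker}(I+\alpha)$, where $I$ is the identity automorphism. Let $\xi_1$ and $\xi_2$ be independent random variables with values in $X$ and distributions $\mu_1$ and $\mu_2$ whose characteristic functions $\hat\mu_1,\hat\mu_2$ do not vanish anywhere on the character group $Y$ of $X$. Assume that the conditional distribution of the linear form $L_2=\xi_1+\alpha\xi_2$ given $L_1=\xi_1+\xi_2$ is symmetric. Then $\mu_j=\omega*E_{x_j}$, $j=1,2$, where $\omega$ is a distribution supported in $K$ and $x_1,x_2\in X$.
   Context: For a locally compact Abelian group $X$ with character group $Y$, the characteristic function of a probability distribution $\mu$ on $X$ is $\hat\mu(y)=\int_X (x,y)\,d\mu(x)$, $y\in Y$, where $(x,y)$ is the value of the character $y$ at $x$. $E_x$ denotes the degenerate distribution concentrated at $x\in X$, and $*$ denotes convolution. ''The conditional distribution of $L_2$ given $L_1$ is symmetric'' means that the random vectors $(L_1,L_2)$ and $(L_1,-L_2)$ have the same distribution. *)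

From mathcomp Require Import all_boot all_order all_algebra all_field.
Set Implicit Arguments. Unset Strict Implicit. Unset Printing Implicit Defensive.
Import Order.TTheory GRing.Theory Num.Theory.
Local Open Scope ring_scope.

Definition is_distribution (X : finZmodType) (mu : X -> algC) : Prop :=
  (forall x, 0 <= mu x) /\ \sum_(x : X) mu x = 1.

Definition is_character (X : finZmodType) (chi : X -> algC) : Prop :=
  (forall x y, chi (x + y) = chi x * chi y) /\ (forall x, `|chi x| = 1).

Definition charfun (X : finZmodType) (mu : X -> algC) (chi : X -> algC) : algC :=
  \sum_(x : X) mu x * chi x.

Definition degen (X : finZmodType) (a : X) : X -> algC :=
  fun x => (x == a)%:R.

Definition conv (X : finZmodType) (mu nu : X -> algC) : X -> algC :=
  fun x => \sum_(y : X) mu y * nu (x - y).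

(* Joint law of (L1, L2) = (xi1 + xi2, xi1 + alpha xi2) where xi1, xi2 are
   independent with laws mu1, mu2; sgn = true gives the law of (L1, -L2). *)
Definition law_L1L2 (X : finZmodType) (alpha : X -> X) (mu1 mu2 : X -> algC)
  (sgn : bool) (a b : X) : algC :=
  \sum_(p : X * X | (p.1 + p.2 == a) &&
        ((if sgn then - (p.1 + alpha p.2) else p.1 + alpha p.2) == b))
     mu1 p.1 * mu2 p.2.

(* The conditional distribution of L2 given L1 is symmetric:
   (L1, L2) and (L1, -L2) are identically distributed. *)
Definition cond_symmetric (X : finZmodType) (alpha : X -> X) (mu1 mu2 : X -> algC) : Prop :=
  forall a b : X, law_L1L2 alpha mu1 mu2 false a b = law_L1L2 alpha mu1 mu2 true a b.

Definition kerIa (X : finZmodType) (alpha : X -> X) : {set X} :=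
  [set x : X | x + alpha x == 0].

(** Let Y be the character group of X and beta the adjoint of alpha on Y; as X has no
    elements of order 2, neither has Y, so P = (I + beta)/2 and Q = (I - beta)/2 make
    sense, and P + Q = I, P - Q = beta.  Conditional symmetry is equivalent to
      mu1^(u + v) mu2^(u + beta v) = mu1^(u - v) mu2^(u - beta v),
    and after the substitution u + v = a, u - v = b the moduli phi = |mu1^|, psi = |mu2^|
    satisfy phi(a) psi(P a + Q b) = phi(b) psi(Q a + P b).  Comparing four instances of
    this identity shows that the mixed second difference of log phi in the directions
    P k and Q m does not depend on the base point; since every element of Y has finite
    order it must vanish, so phi(P k + Q m) = phi(P k) phi(Q m).  This forces phi = 1 on
    PY /\ QY and then phi = psi = 1 on PY.  A characteristic function of modulus 1 at a
    character forces that character to be constant on the support, so P is constant on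
    the supports of mu1 and mu2: each of them lives on a coset of Ker P = Ker(I + alpha).
    Finally the equation at u = v = w/2 shows that mu2 is a translate of mu1. *)

From HB Require Import structures.
From mathcomp Require Import all_boot all_order all_algebra all_field.
From mathcomp Require Import all_fingroup all_solvable all_character.
From mathcomp Require Import ring.
From Stdlib Require Import FunctionalExtensionality.

Set Implicit Arguments.
Unset Strict Implicit.
Unset Printing Implicit Defensive.

Import Order.TTheory GRing.Theory Num.Theory FinRing.Theory.
Local Open Scope ring_scope.

Lemma geometric_periodic_eq1 (R : numDomainType) (g : nat -> R) (c : R) (n : nat) :
  (0 < n)%N -> 0 <= c -> g 0%N != 0 -> g n = g 0%N ->
  (forall j, g j.+1 = c * g j) -> c = 1.
Proof.
move=> n_gt0 c_ge0 g0 gn gS.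
have gX j : g j = c ^+ j * g 0%N.
  by elim: j => [|j IHj]; rewrite ?expr0 ?mul1r // gS IHj exprS mulrA.
have /eqP : c ^+ n = 1 by apply: (mulIf g0); rewrite -gX gn mul1r.
by rewrite pexpr_eq1 // => /eqP.
Qed.

Section HalfProjections.
Variables (Y : zmodType) (beta half : {additive Y -> Y}).
Hypothesis halfK : forall y, half y + half y = y.

(* (I + beta)/2 and (I - beta)/2, locked so that rewriting with [raddfD] does not
   unfold them. *)
Fact Pb_key : unit. Proof. exact: tt. Qed.
Definition Pb := locked_with Pb_key (fun y => half y + beta (half y)).
Canonical Pb_unlockable := [unlockable fun Pb].
Fact Qb_key : unit. Proof. exact: tt. Qed.
Definition Qb := locked_with Qb_key (fun y => half y - beta (half y)).
Canonical Qb_unlockable := [unlockable fun Qb].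

Lemma PbE y : Pb y = half y + beta (half y). Proof. by rewrite unlock. Qed.
Lemma QbE y : Qb y = half y - beta (half y). Proof. by rewrite unlock. Qed.

Fact Pb_is_zmod_morphism : zmod_morphism Pb.
Proof. by move=> a b; rewrite !PbE (raddfB half) (raddfB beta) opprD addrACA. Qed.
HB.instance Definition _ := GRing.isZmodMorphism.Build Y Y Pb Pb_is_zmod_morphism.
Fact Qb_is_zmod_morphism : zmod_morphism Qb.
Proof.
by move=> a b; rewrite !QbE (raddfB half) (raddfB beta) !opprD !opprK addrACA.
Qed.
HB.instance Definition _ := GRing.isZmodMorphism.Build Y Y Qb Qb_is_zmod_morphism.

Lemma half_double y : half (y + y) = y.
Proof. by rewrite raddfD halfK. Qed.

Lemma beta_half y : beta (half y) = half (beta y).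
Proof. by rewrite -[LHS]half_double -(raddfD beta) halfK. Qed.

Lemma PbDQb y : Pb y + Qb y = y.
Proof. by rewrite !PbE !QbE addrACA subrr addr0 halfK. Qed.

Lemma subr_Pb y : y - Pb y = Qb y.
Proof. by rewrite -{1}(PbDQb y) addrC addKr. Qed.

Lemma PbBQb y : Pb y - Qb y = beta y.
Proof. by rewrite !PbE !QbE opprB addrC addrA subrK -(raddfD beta) halfK. Qed.

Lemma Pb_double y : Pb y + Pb y = y + beta y.
Proof. by rewrite !PbE addrACA -(raddfD beta) !halfK. Qed.

Lemma PbQbC y : Pb (Qb y) = Qb (Pb y).
Proof.
rewrite !PbE !QbE (raddfB half) (raddfD half) (raddfB beta) (raddfD beta).
by rewrite -!beta_half addrA subrK opprD addrA addrK.
Qed.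

Lemma PbPb_QbQb y : Pb (Pb y) - Qb (Qb y) = beta y.
Proof.
by rewrite -{3}(PbDQb y) raddfD -!PbBQb PbQbC addrA subrK.
Qed.
End HalfProjections.

(* Y will be the character group, beta the adjoint of alpha, and phi, psi the moduli of
   the two characteristic functions. *)
Section SymmetryEquation.
Variables (Y : zmodType) (R : numFieldType) (n : nat).
Hypotheses (n_gt0 : (0 < n)%N) (mulrn_n : forall y : Y, y *+ n = 0).
Variables (beta half : {additive Y -> Y}).
Hypotheses (beta_bij : bijective beta) (halfK : forall y, half y + half y = y).
Variables phi psi : Y -> R.
Hypotheses (phi_gt0 : forall y, 0 < phi y) (psi_gt0 : forall y, 0 < psi y).
Hypotheses (phi_le1 : forall y, phi y <= 1) (psi_le1 : forall y, psi y <= 1).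
Hypotheses (phi0 : phi 0 = 1) (psi0 : psi 0 = 1).
Hypothesis phi_psi_eq : forall u v,
  phi (u + v) * psi (u + beta v) = phi (u - v) * psi (u - beta v).

Local Notation P := (Pb beta half).
Local Notation Q := (Qb beta half).

Let phi_neq0 y : phi y != 0 := lt0r_neq0 (phi_gt0 y).
Let psi_neq0 y : psi y != 0 := lt0r_neq0 (psi_gt0 y).

Lemma phi_psi_PQ a b : phi a * psi (P a + Q b) = phi b * psi (Q a + P b).
Proof.
have uDv : half (a + b) + half (a - b) = a.
  by rewrite -raddfD addrACA subrr addr0 half_double.
have uBv : half (a + b) - half (a - b) = b.
  by rewrite -raddfB opprB addrC subrKA half_double.
have uDbv : half (a + b) + beta (half (a - b)) = P a + Q b.
  by rewrite PbE QbE raddfD !raddfB addrACA.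
have uBbv : half (a + b) - beta (half (a - b)) = Q a + P b.
  by rewrite PbE QbE raddfD [half (a - b)]raddfB [beta _]raddfB opprD opprK addrACA.
by have := phi_psi_eq (half (a + b)) (half (a - b)); rewrite uDv uBv uDbv uBbv.
Qed.

Lemma phi_psi_shift a k m :
  phi (a + P k + Q m) * psi (P a + beta k) = phi (- Q k - P m) * psi (Q a - beta m).
Proof.
have PA : P a + P (P k) + Q (P m) + (- Q (Q k) - Q (P m)) = P a + beta k.
  by rewrite addrACA subrr addr0 -addrA (PbPb_QbQb beta halfK).
have QA : Q a + Q (P k) + Q (Q m) + (- Q (P k) - P (P m)) = Q a - beta m.
  by rewrite addrACA addrK -(PbPb_QbQb beta halfK) opprB.
have := phi_psi_PQ (a + P k + Q m) (- Q k - P m).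
by rewrite !raddfD !raddfN /= !(PbQbC beta halfK) PA QA.
Qed.

Lemma phi_mixed_diff a k m :
  phi (a + P k + Q m) * phi a * (phi (- Q k) * phi (- P m)) =
  phi (a + P k) * phi (a + Q m) * phi (- Q k - P m).
Proof.
(* The psi-factors of these four instances cancel in pairs. *)
have E := phi_psi_shift a k m.
have E0 := phi_psi_shift a 0 0; have Ek := phi_psi_shift a k 0.
have Em := phi_psi_shift a 0 m.
rewrite !raddf0 ?addr0 ?sub0r ?phi0 ?mul1r in E0 Ek Em.
have nz : psi (P a) * psi (P a + beta k) != 0.
  by rewrite mulf_neq0.
apply: (mulIf nz).
transitivity (phi (a + P k + Q m) * psi (P a + beta k) * (phi a * psi (P a)) *
  (phi (- Q k) * phi (- P m))); first by ring.
transitivity (phi (a + P k) * psi (P a + beta k) * (phi (a + Q m) * psi (P a)) *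
  phi (- Q k - P m)); last by ring.
by rewrite E E0 Ek Em; ring.
Qed.

Lemma phi_PQ_mul k m : phi (P k + Q m) = phi (P k) * phi (Q m).
Proof.
pose c := phi (- Q k - P m) / (phi (- Q k) * phi (- P m)).
have nz : phi (- Q k) * phi (- P m) != 0 by rewrite mulf_neq0.
have D a : phi (a + P k + Q m) * phi a = c * (phi (a + P k) * phi (a + Q m)).
  by apply: (mulIf nz); rewrite phi_mixed_diff /c; field; rewrite !phi_neq0.
have c1 : c = 1.
  apply: (@geometric_periodic_eq1 _ (fun j => phi (Q m *+ j + P k) / phi (Q m *+ j)) c n).
  - exact: n_gt0.
  - by rewrite divr_ge0 // ltW // mulr_gt0.
  - by rewrite mulr0n add0r mulf_neq0 ?invr_eq0.
  - by rewrite mulrn_n.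
  move=> j; rewrite mulrSr addrAC.
  apply: (mulIf (phi_neq0 (Q m *+ j + Q m))); apply: (mulIf (phi_neq0 (Q m *+ j))).
  by rewrite divfK // D; field.
by have := D 0; rewrite c1 mul1r !add0r phi0 mulr1.
Qed.

Lemma phi_Qb_eq1 k m : P k = Q m -> phi (Q m) = 1.
Proof.
move=> PkQm.
apply: (@geometric_periodic_eq1 _ (fun j => phi (Q m *+ j)) _ n).
- exact: n_gt0.
- exact: ltW.
- by rewrite mulr0n.
- by rewrite mulrn_n.
move=> j; rewrite mulrSr.
have -> : Q m *+ j = P (k *+ j) by rewrite -PkQm raddfMn.
by rewrite phi_PQ_mul mulrC.
Qed.

Lemma phi_psi_Pb_eq1 w : phi (P w) = 1 /\ psi (P w) = 1.
Proof.
have [beta_inv betaK betaVK] := beta_bij.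
(* With beta k = P w, P k splits as P w + Q k, and Q k lies in PY /\ QY. *)
pose k := beta_inv (P w).
have Pk : P k = P w + Q k by rewrite -[P w](betaVK) -/k -(PbBQb beta halfK) subrK.
have Qk1 : phi (Q k) = 1.
  by apply: (@phi_Qb_eq1 (k - w)); rewrite raddfB /= Pk addrAC subrr add0r.
have NQk1 : phi (- Q k) = 1.
  rewrite -raddfN; apply: (@phi_Qb_eq1 (w - k)).
  by rewrite raddfB /= Pk opprD addrA subrr add0r raddfN.
have bk : beta k = P w by exact: betaVK.
have := phi_psi_shift 0 k 0.
rewrite !raddf0 ?add0r ?addr0 ?subr0 bk Pk phi_PQ_mul Qk1 NQk1 psi0 !mulr1 => E.
have phi1 : phi (P w) = 1.
  by apply: le_anti; rewrite phi_le1 /= -{1}E ler_piMr // ltW.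
by split; last by rewrite -E phi1 mul1r.
Qed.
End SymmetryEquation.

Section Characters.
Variable X : finZmodType.
Implicit Types (chi psi mu nu : X -> algC) (x z : X).

Lemma charD chi x z : is_character chi -> chi (x + z) = chi x * chi z.
Proof. by case=> chiD _; apply: chiD. Qed.

Lemma char_norm chi x : is_character chi -> `|chi x| = 1.
Proof. by case=> _ chiN; apply: chiN. Qed.

Lemma char_neq0 chi x : is_character chi -> chi x != 0.
Proof. by move=> chiP; rewrite -normr_eq0 char_norm // oner_eq0. Qed.

Lemma char0 chi : is_character chi -> chi 0 = 1.
Proof.
move=> chiP; apply: (mulfI (char_neq0 0 chiP)).
by rewrite -charD // addr0 mulr1.
Qed.

Lemma charN chi x : is_character chi -> chi (- x) = (chi x)^-1.
Proof.
move=> chiP; apply: (mulfI (char_neq0 x chiP)).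
by rewrite -charD // subrr char0 // divff // char_neq0.
Qed.

Lemma charMn chi x n : is_character chi -> chi (x *+ n) = chi x ^+ n.
Proof.
move=> chiP; elim: n => [|n IHn]; first by rewrite mulr0n char0.
by rewrite mulrS charD // IHn exprS.
Qed.

Lemma char_expr_card chi x : is_character chi -> chi x ^+ #|X| = 1.
Proof.
move=> chiP; rewrite -charMn // -zmodXgE.
by rewrite -cardsT expg_cardG ?inE // char0.
Qed.

Lemma is_character1 : @is_character X (fun=> 1).
Proof. by split=> [x z|x]; rewrite ?mulr1 ?normr1. Qed.

Lemma is_characterM chi psi :
  is_character chi -> is_character psi -> is_character (fun x => chi x * psi x).
Proof.
move=> chiP psiP; split=> [x z|x]; first by rewrite !charD // mulrACA.
by rewrite normrM !char_norm // mulr1.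
Qed.

Lemma is_characterV chi : is_character chi -> is_character (fun x => (chi x)^-1).
Proof.
move=> chiP; split=> [x z|x]; first by rewrite charD // invfM.
by rewrite normfV char_norm // invr1.
Qed.

Lemma is_character_comp chi (f : X -> X) :
  {morph f : a b / a + b} -> is_character chi -> is_character (chi \o f).
Proof. by move=> fD chiP; split=> [x z|x] /=; rewrite ?fD ?charD ?char_norm. Qed.

Lemma eq_charfun mu chi psi : chi =1 psi -> charfun mu chi = charfun mu psi.
Proof. by move=> eq_chi; apply: eq_bigr => x _; rewrite eq_chi. Qed.

Lemma charfun1 mu : is_distribution mu -> charfun mu (fun=> 1) = 1.
Proof. by case=> _ mu1; rewrite -[RHS]mu1; apply: eq_bigr => x _; exact: mulr1. Qed.

Lemma charfun_norm_le1 mu chi :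
  is_distribution mu -> is_character chi -> `|charfun mu chi| <= 1.
Proof.
case=> mu_ge0 mu1 chiP; rewrite -mu1 (le_trans (ler_norm_sum _ _ _)) //.
by apply: ler_sum => x _; rewrite normrM (char_norm _ chiP) mulr1 ger0_norm.
Qed.

Lemma charfun_degen a chi : charfun (degen a) chi = chi a.
Proof.
rewrite /charfun (bigD1 a) //= /degen eqxx mul1r big1 ?addr0 // => x /negPf->.
by rewrite mul0r.
Qed.

Lemma charfun_shift mu a chi : is_character chi ->
  charfun (fun x => mu (x - a)) chi = charfun mu chi * chi a.
Proof.
move=> chiP; rewrite /charfun mulr_suml (reindex_inj (addIr a)) /=.
by apply: eq_bigr => x _; rewrite addrK charD // mulrA.
Qed.

Lemma charfun_supp_const mu chi g c : (forall x, mu x != 0 -> g x = c) ->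
  charfun mu (fun x => chi x * g x) = charfun mu chi * c.
Proof.
move=> gc; rewrite /charfun mulr_suml; apply: eq_bigr => x _.
by have [->|/gc->] := eqVneq (mu x) 0; rewrite ?mul0r // mulrA.
Qed.

Lemma charfun_inj mu nu :
  (forall chi, is_character chi -> charfun mu chi = charfun nu chi) -> mu =1 nu.
Proof.
move=> eq_mu_nu z; apply/eqP; rewrite -subr_eq0; apply/eqP.
pose G := [set: X]%G; pose m x := mu x - nu x.
have irr_char i : is_character ('chi[G]_i : X -> algC).
  have lin : 'chi[G]_i \is a linear_char by apply/char_abelianP/zmod_abelian.
  split=> [a b|a]; last by rewrite normC_lin_char ?inE.
  by rewrite -zmodMgE lin_charM ?inE.
have m_orth chi : is_character chi -> \sum_x m x * chi x = 0.
  move=> chiP; under eq_bigr do rewrite mulrBl.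
  by rewrite sumrB; apply/eqP; rewrite subr_eq0; apply/eqP; exact: eq_mu_nu.
have class_z x : (x \in (z ^: G)%g) = (x == z).
  apply/imsetP/eqP => [[y _ ->]|->]; last by exists 0; rewrite ?inE // conjg1.
  by rewrite /conjg /= !zmodMgE zmodVgE addrC -addrA addrN addr0.
have orth x : \sum_i ('chi[G]_i z)^* * (m x * 'chi_i x) =
    m x * (#|('C_G[x])%g|%:R *+ (x == z)).
  under eq_bigr do rewrite mulrCA.
  rewrite -mulr_sumr; under eq_bigr do rewrite mulrC.
  by rewrite second_orthogonality_relation ?inE // class_z.
have : \sum_i ('chi[G]_i z)^* * (\sum_x m x * 'chi_i x) = 0.
  by rewrite big1 // => i _; rewrite (m_orth _ (irr_char i)) mulr0.
under eq_bigr do rewrite mulr_sumr.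
rewrite exchange_big /=; under eq_bigr do rewrite orth.
rewrite (bigD1 z) //= big1 => [|x /negPf->]; last by rewrite mulr0.
rewrite addr0 eqxx mulr1n => /eqP.
by rewrite mulf_eq0 pnatr_eq0 (negPf (lt0n_neq0 (cardG_gt0 _))) orbF => /eqP.
Qed.

Lemma char_separates z : (forall chi, is_character chi -> chi z = 1) -> z = 0.
Proof.
move=> chi_z1; have : degen z z = degen 0 z.
  by apply: charfun_inj => chi chiP; rewrite !charfun_degen chi_z1 ?char0.
by rewrite /degen eqxx; case: eqP => // _ /eqP; rewrite oner_eq0.
Qed.

Lemma charfun_norm1_const mu chi x x' :
  is_distribution mu -> is_character chi -> `|charfun mu chi| = 1 ->
  mu x != 0 -> mu x' != 0 -> chi x = chi x'.
Proof.
move=> [mu_ge0 mu1] chiP norm1 mux mux'.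
have : `|\sum_x mu x * chi x| = \sum_x `|mu x * chi x|.
  rewrite norm1 -mu1; apply: eq_bigr => y _.
  by rewrite normrM (char_norm _ chiP) mulr1 ger0_norm.
case/normC_sum_eq => t _ t_phase.
have chi_t y : mu y != 0 -> chi y = t.
  move=> muy; apply: (mulfI muy); rewrite [LHS]t_phase // normrM.
  by rewrite (char_norm _ chiP) mulr1 ger0_norm.
by rewrite !chi_t.
Qed.

Lemma distribution_supp mu : is_distribution mu -> exists x, mu x != 0.
Proof.
case=> _ mu1; have [x mux|mu0] := pickP (fun x => mu x != 0); first by exists x.
suff : (1 : algC) = 0 by move/eqP; rewrite oner_eq0.
by rewrite -mu1 big1 // => x _; apply/eqP/negbFE/mu0.
Qed.

Lemma distribution_shift mu a : is_distribution mu -> is_distribution (fun x => mu (x + a)).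
Proof.
case=> mu_ge0 mu1; split=> // ; rewrite -[RHS]mu1.
by rewrite [RHS](reindex_inj (addIr a)).
Qed.

Lemma conv_degen mu a : conv mu (degen a) =1 (fun x => mu (x - a)).
Proof.
move=> x; rewrite /conv (bigD1 (x - a)) //= /degen subKr eqxx mulr1.
rewrite big1 ?addr0 // => y ya; rewrite (_ : (x - y == a) = false) ?mulr0 //.
by apply: contraNF ya => /eqP<-; rewrite subKr.
Qed.
End Characters.

Section Dual.
Variable X : finZmodType.

Definition is_characterb (f : {ffun X -> algC}) : bool :=
  [forall x, forall z, f (x + z) == f x * f z] && [forall x, `|f x| == 1].

Lemma is_characterP (f : {ffun X -> algC}) : reflect (is_character f) (is_characterb f).
Proof.
apply: (iffP andP) => [[/forallP fD /forallP fN]|[fD fN]]; last first.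
  by split; apply/forallP => x; [apply/forallP => z|]; apply/eqP.
by split=> [x z|x]; [have /forallP/(_ z)/eqP := fD x | exact/eqP].
Qed.

(* The character group of X, written additively: the sum of two characters is their
   pointwise product. *)
Record dual := Dual {dual_ffun :> {ffun X -> algC}; _ : is_characterb dual_ffun}.
HB.instance Definition _ := [isSub for dual_ffun].
HB.instance Definition _ := [Choice of dual by <:].

Lemma dual_char (y : dual) : is_character y.
Proof. exact/is_characterP/valP. Qed.

Lemma dual_ext (y z : dual) : y =1 z -> y = z.
Proof. by move=> yz; apply/val_inj/ffunP. Qed.

Fact ffun_is_characterb chi : is_character chi -> is_characterb [ffun x => chi x].
Proof.
move=> chiP; apply/is_characterP; split=> [x z|x]; rewrite !ffunE.
  exact: charD.
exact: char_norm.
Qed.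

Definition dual_of chi (chiP : is_character chi) := Dual (ffun_is_characterb chiP).

Lemma dual_ofE chi (chiP : is_character chi) x : dual_of chiP x = chi x.
Proof. exact: ffunE. Qed.

Definition dual_zero := dual_of (@is_character1 X).
Definition dual_add (y z : dual) := dual_of (is_characterM (dual_char y) (dual_char z)).
Definition dual_opp (y : dual) := dual_of (is_characterV (dual_char y)).

Fact dual_addA : associative dual_add.
Proof. by move=> y z t; apply: dual_ext => x; rewrite !dual_ofE mulrA. Qed.
Fact dual_addC : commutative dual_add.
Proof. by move=> y z; apply: dual_ext => x; rewrite !dual_ofE mulrC. Qed.
Fact dual_add0 : left_id dual_zero dual_add.
Proof. by move=> y; apply: dual_ext => x; rewrite !dual_ofE mul1r. Qed.
Fact dual_addN : left_inverse dual_zero dual_opp dual_add.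
Proof.
by move=> y; apply: dual_ext => x; rewrite !dual_ofE mulVf // (char_neq0 _ (dual_char y)).
Qed.
HB.instance Definition _ :=
  GRing.isZmodule.Build dual dual_addA dual_addC dual_add0 dual_addN.

Lemma dual0E x : (0 : dual) x = 1.
Proof. exact: dual_ofE. Qed.

Lemma dualDE (y z : dual) x : (y + z) x = y x * z x.
Proof. exact: dual_ofE. Qed.

Lemma dualNE (y : dual) x : (- y) x = (y x)^-1.
Proof. exact: dual_ofE. Qed.

Lemma dualMnE (y : dual) n x : (y *+ n) x = y x ^+ n.
Proof. by elim: n => [|n IHn]; rewrite ?mulr0n ?dual0E // mulrS dualDE IHn exprS. Qed.

Lemma dual_mulrn_card (y : dual) : y *+ #|X| = 0.
Proof. by apply: dual_ext => x; rewrite dualMnE dual0E (char_expr_card _ (dual_char y)). Qed.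

Definition dual_comp (f : X -> X) (fD : {morph f : a b / a + b}) (y : dual) :=
  dual_of (is_character_comp fD (dual_char y)).

Lemma dual_compE f (fD : {morph f : a b / a + b}) y x : dual_comp fD y x = y (f x).
Proof. exact: dual_ofE. Qed.

Fact dual_comp_is_zmod_morphism f (fD : {morph f : a b / a + b}) :
  zmod_morphism (dual_comp fD).
Proof. by move=> y z; apply: dual_ext => x; rewrite !(dual_compE, dualDE, dualNE). Qed.
HB.instance Definition _ f (fD : {morph f : a b / a + b}) :=
  GRing.isZmodMorphism.Build dual dual (dual_comp fD) (dual_comp_is_zmod_morphism fD).

Lemma dual_comp_bij f (fD : {morph f : a b / a + b}) :
  bijective f -> bijective (dual_comp fD).
Proof.
case=> g fK gK; have gD : {morph g : a b / a + b}.
  by move=> a b; apply: (can_inj fK); rewrite fD !gK.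
by exists (dual_comp gD) => y; apply: dual_ext => x; rewrite !dual_compE ?fK ?gK.
Qed.
End Dual.

Section Halving.
Variables (X : finZmodType) (no2 : forall x : X, x + x = 0 -> x = 0).

Lemma double_inj : injective (fun x : X => x + x).
Proof.
move=> x z /= xz; apply/eqP; rewrite -subr_eq0; apply/eqP/no2.
by rewrite addrACA xz -opprD subrr.
Qed.

Definition halve := invF double_inj.

Lemma halveK x : halve x + halve x = x.
Proof. exact: (f_invF double_inj). Qed.

Fact halve_is_zmod_morphism : zmod_morphism halve.
Proof.
move=> a b; apply: double_inj => /=.
by rewrite halveK addrACA -opprD !halveK.
Qed.
HB.instance Definition _ := GRing.isZmodMorphism.Build X X halve halve_is_zmod_morphism.
End Halving.

Section SymmetricConditional.
Variables (X : finZmodType) (alpha : {additive X -> X}) (mu1 mu2 : X -> algC).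

Lemma law_L1L2_charfun sgn u v : is_character u -> is_character v ->
  \sum_a \sum_b law_L1L2 alpha mu1 mu2 sgn a b * (u a * v b) =
  charfun mu1 (fun x => u x * v (if sgn then - x else x)) *
  charfun mu2 (fun x => u x * v (if sgn then - alpha x else alpha x)).
Proof.
move=> uP vP; rewrite /law_L1L2.
under eq_bigr do under eq_bigr do rewrite big_mkcond mulr_suml.
under eq_bigr do rewrite exchange_big.
rewrite exchange_big /charfun mulr_suml; under [RHS]eq_bigr do rewrite mulr_sumr.
rewrite [RHS]pair_bigA /=; apply: eq_bigr => -[x1 x2] _ /=.
set t := (if sgn then _ else _).
have inner a : \sum_b (if (x1 + x2 == a) && (t == b) then mu1 x1 * mu2 x2 else 0)
    * (u a * v b) = (a == x1 + x2)%:R * (mu1 x1 * mu2 x2 * (u a * v t)).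
  rewrite (bigD1 t) //= eqxx andbT big1 ?addr0 => [|b /negPf tb]; last first.
    by rewrite [t == b]eq_sym tb andbF mul0r.
  by rewrite eq_sym; case: (_ == _); rewrite ?mul1r ?mul0r.
under eq_bigr do rewrite inner.
rewrite (bigD1 (x1 + x2)) //= eqxx mul1r big1 ?addr0 => [|a /negPf->]; last by rewrite mul0r.
by rewrite {inner}/t; case: sgn; rewrite ?opprD !charD //; ring.
Qed.

Hypothesis mu_sym : cond_symmetric alpha mu1 mu2.

Local Notation beta := (dual_comp (raddfD alpha)).

Lemma charfun_sym_eq (u v : dual X) :
  charfun mu1 (u + v) * charfun mu2 (u + beta v) =
  charfun mu1 (u - v) * charfun mu2 (u - beta v).
Proof.
apply: (@etrans _ _
  (\sum_(a : X) \sum_(b : X) law_L1L2 alpha mu1 mu2 false a b * (u a * v b))).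
  rewrite (law_L1L2_charfun _ (dual_char u) (dual_char v)).
  by congr (_ * _); apply: eq_charfun => x; rewrite dualDE ?dual_compE.
apply: (@etrans _ _
  (\sum_(a : X) \sum_(b : X) law_L1L2 alpha mu1 mu2 true a b * (u a * v b))).
  by apply: eq_bigr => a _; apply: eq_bigr => b _; rewrite mu_sym.
rewrite (law_L1L2_charfun _ (dual_char u) (dual_char v)).
by congr (_ * _); apply: eq_charfun => x;
  rewrite dualDE dualNE ?dual_compE (charN _ (dual_char v)).
Qed.

Hypotheses (no2 : forall x : X, x + x = 0 -> x = 0) (alpha_bij : bijective alpha).
Hypotheses (mu1_distr : is_distribution mu1) (mu2_distr : is_distribution mu2).
Hypotheses (mu1_neq0 : forall chi, is_character chi -> charfun mu1 chi != 0)
           (mu2_neq0 : forall chi, is_character chi -> charfun mu2 chi != 0).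

Local Notation halfY := (dual_comp (raddfD (halve no2))).
Local Notation PX := (Pb alpha (halve no2)).

Lemma dual_halfK (y : dual X) : halfY y + halfY y = y.
Proof.
by apply: dual_ext => x; rewrite dualDE !dual_compE -(charD _ _ (dual_char y)) halveK.
Qed.

Lemma dual_PbE (w : dual X) x : Pb beta halfY w x = w (PX x).
Proof.
rewrite !PbE dualDE !dual_compE -(charD _ _ (dual_char w)).
by rewrite (beta_half alpha (halveK no2)).
Qed.

Lemma charfun_Pb_norm1 (w : dual X) :
  `|charfun mu1 (Pb beta halfY w)| = 1 /\ `|charfun mu2 (Pb beta halfY w)| = 1.
Proof.
apply: (@phi_psi_Pb_eq1 _ _ #|X| _ _ _ _ _ _ (fun y : dual X => `|charfun mu1 y|)
  (fun y : dual X => `|charfun mu2 y|)) => [|y|||y|y|y|y|||u v]; cbv beta.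
- by apply/card_gt0P; exists 0.
- exact: dual_mulrn_card.
- exact: dual_comp_bij.
- exact: dual_halfK.
- by rewrite normr_gt0; apply/mu1_neq0/dual_char.
- by rewrite normr_gt0; apply/mu2_neq0/dual_char.
- exact/charfun_norm_le1/dual_char.
- exact/charfun_norm_le1/dual_char.
- by rewrite (eq_charfun _ (dual0E (X:=X))) charfun1 ?normr1.
- by rewrite (eq_charfun _ (dual0E (X:=X))) charfun1 ?normr1.
by rewrite -!normrM charfun_sym_eq.
Qed.

Lemma Pb_const_on_supp mu : is_distribution mu ->
  (forall w : dual X, `|charfun mu (Pb beta halfY w)| = 1) ->
  forall x x', mu x != 0 -> mu x' != 0 -> PX x = PX x'.
Proof.
move=> mu_distr mu_norm1 x x' mux mux'; apply/eqP; rewrite -subr_eq0; apply/eqP.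
apply: char_separates => chi chiP; pose w := Pb beta halfY (dual_of chiP).
have := charfun_norm1_const mu_distr (dual_char w) (mu_norm1 _) mux mux'.
rewrite !dual_PbE !dual_ofE => chi_eq.
by rewrite charD // charN // chi_eq divff // char_neq0.
Qed.

Lemma supp1_Pb_const x x' : mu1 x != 0 -> mu1 x' != 0 -> PX x = PX x'.
Proof. by apply: Pb_const_on_supp => // w; case: (charfun_Pb_norm1 w). Qed.

Lemma supp2_Pb_const x x' : mu2 x != 0 -> mu2 x' != 0 -> PX x = PX x'.
Proof. by apply: Pb_const_on_supp => // w; case: (charfun_Pb_norm1 w). Qed.

Lemma mu2_translate_mu1 x2 : mu2 x2 != 0 -> mu2 =1 (fun z => mu1 (z - (PX x2 + PX x2))).
Proof.
move=> mux2; apply: charfun_inj => chi chiP.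
rewrite charfun_shift // charD //; pose w := dual_of chiP.
have P2 : charfun mu2 (Pb beta halfY w) = chi (PX x2).
  rewrite (eq_charfun _ (psi := fun x => 1 * chi (PX x))) => [|x]; last first.
    by rewrite dual_PbE dual_ofE mul1r.
  rewrite (charfun_supp_const (fun=> 1) (c := chi (PX x2))) ?charfun1 ?mul1r // => x mux.
  by rewrite (supp2_Pb_const mux mux2).
have Q2 : charfun mu2 (Qb beta halfY w) = charfun mu2 chi * (chi (PX x2))^-1.
  rewrite (eq_charfun _ (psi := fun x => chi x * (chi (PX x))^-1)) => [|x]; last first.
    by rewrite -(subr_Pb beta dual_halfK) dualDE dualNE dual_PbE !dual_ofE.
  by apply: charfun_supp_const => x mux; rewrite (supp2_Pb_const mux mux2).
have := charfun_sym_eq (halfY w) (halfY w).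
rewrite dual_halfK subrr -PbE -QbE P2 Q2 (eq_charfun _ (dual0E (X:=X))) charfun1 //.
rewrite mul1r (eq_charfun _ (dual_ofE chiP)) => E.
by rewrite mulrA E -mulrA mulVf ?mulr1 ?char_neq0.
Qed.
End SymmetricConditional.

Theorem theorem2p1 (X : finZmodType)
  (hX : forall x : X, x + x = 0 -> x = 0)
  (alpha : {additive X -> X}) (halpha : bijective alpha)
  (mu1 mu2 : X -> algC)
  (hmu1 : is_distribution mu1) (hmu2 : is_distribution mu2)
  (hne1 : forall chi, is_character chi -> charfun mu1 chi != 0)
  (hne2 : forall chi, is_character chi -> charfun mu2 chi != 0)
  (hsym : cond_symmetric alpha mu1 mu2) :
  exists (omega : X -> algC) (x1 x2 : X),
    [/\ is_distribution omega,
        (forall x, x \notin kerIa alpha -> omega x = 0),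
        mu1 = conv omega (degen x1) &
        mu2 = conv omega (degen x2)].
Proof.
have [x1 mux1] := distribution_supp hmu1.
have [x2 mux2] := distribution_supp hmu2.
have PX_const := supp1_Pb_const hsym hX halpha hmu1 hmu2 hne1 hne2.
have mu2E := mu2_translate_mu1 hsym hX halpha hmu1 hmu2 hne1 hne2 mux2.
pose d := Pb alpha (halve hX) x2 + Pb alpha (halve hX) x2.
exists (fun x => mu1 (x + x1)), x1, (d + x1); split.
- exact: distribution_shift.
- move=> x; apply: contraNeq => mux; rewrite inE.
  have := PX_const _ _ mux mux1; rewrite raddfD -[RHS]add0r => /addIr PX0.
  by rewrite -(Pb_double alpha (halveK hX)) PX0 addr0.
- by apply: functional_extensionality => z; rewrite conv_degen subrK.
- apply: functional_extensionality => z; rewrite conv_degen mu2E.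
  by rewrite [in RHS]opprD [in RHS]addrA subrK.
Qed.
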